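(* Let $(\frac pq,\frac rs)$ be a Farey pair of order $n$ with $q<s$, let $d=\lfloor n/q\rfloor$, $\alpha\in(0,1)$, $\beta=1-\alpha$, and $\phi_\alpha(t)=(t^q-\beta)^d-\alpha^dt^{qd-s}$. Then $\phi_\alpha$ has no multiple root lying in the set $\hat{\mathcal K}_n(q,s)$.
   Context: A matrix is stochastic if it is entrywise nonnegative with all row sums $1$; $\Theta_n$ is the set of all eigenvalues of all $n\times n$ stochastic matrices and $\partial\Theta_n$ its boundary. $\mathcal{F}_n=\{p/q:0\le p<q\le n,\ \gcd(p,q)=1\}$; a Farey pair of order $n$ is a pair $(\frac pq,\frac rs)$ of elements of $\mathcal F_n$ with $\frac pq<\frac rs$ and no element of $\mathcal F_n$ strictly between them. For such a pair, $\arg(q,s)=(\frac{2\pi p}{q},\frac{2\pi r}{s})\cup(\frac{2\pi(s-r)}{s},\frac{2\pi(q-p)}{q})$ and $\hat{\mathcal K}_n(q,s)=\{z\in\partial\Theta_n:\arg(z)\in\arg(q,s)\}$, with arguments taken in $[0,2\pi)$. *)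

From HB Require Import structures.
From mathcomp Require Import all_boot all_order all_algebra.
From mathcomp Require Import complex.
From mathcomp Require Import reals trigo.
Set Implicit Arguments. Unset Strict Implicit. Unset Printing Implicit Defensive.
Import Order.TTheory GRing.Theory Num.Theory.
Local Open Scope ring_scope.

Definition stochastic (R : numDomainType) (n : nat) (A : 'M[R]_n) : Prop :=
  (forall i j, 0 <= A i j) /\ (forall i, \sum_(j < n) A i j = 1).

Definition Theta (R : realType) (n : nat) (z : R[i]) : Prop :=
  exists A : 'M[R]_n, stochastic A /\ eigenvalue (map_mx (real_complex R) A) z.

Definition cboundary (R : realType) (S : R[i] -> Prop) (z : R[i]) : Prop :=
  forall e : R, 0 < e ->
    (exists w, S w /\ `|w - z| < real_complex R e) /\ (exists w, ~ S w /\ `|w - z| < real_complex R e).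

Definition is_arg (R : realType) (z : R[i]) (theta : R) : Prop :=
  z != 0 /\ 0 <= theta < 2 * pi /\
  z = `|z| * Complex (cos theta) (sin theta).

Definition in_Farey (n p q : nat) : bool := [&& (p < q)%N, (q <= n)%N & coprime p q].

Definition Farey_pair (n p q r s : nat) : Prop :=
  in_Farey n p q /\ in_Farey n r s /\ (p * s < r * q)%N /\
  (forall a b, in_Farey n a b -> ~ ((p * b < a * q)%N /\ (a * s < r * b)%N)).

Definition in_arg_qs (R : realType) (p q r s : nat) (theta : R) : Prop :=
  (2 * pi * p%:R / q%:R < theta < 2 * pi * r%:R / s%:R) \/
  (2 * pi * (s - r)%:R / s%:R < theta < 2 * pi * (q - p)%:R / q%:R).

Definition Khat (R : realType) (n p q r s : nat) (z : R[i]) : Prop :=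
  cboundary (@Theta R n) z /\ exists theta, is_arg z theta /\ in_arg_qs p q r s theta.

(* Since qd - s may be negative, phi_alpha is in general a Laurent polynomial;
   we represent it by  phi_alpha(t) = phi_num(t) / t^s  with the genuine polynomial
   phi_num(t) = t^s (t^q - beta)^d - alpha^d t^(qd). *)
Definition phi_num (R : realType) (alpha : R) (q s d : nat) : {poly R[i]} :=
  'X^s * ('X^q - (real_complex R (1 - alpha))%:P) ^+ d - real_complex R (alpha ^+ d) *: 'X^(q * d).

(* z <> 0 is a multiple root of phi = P / t^s  iff  (t - z)^2 divides P. *)
Definition multiple_root_at (R : realType) (P : {poly R[i]}) (z : R[i]) : Prop :=
  z != 0 /\ ('X - z%:P) ^+ 2 %| P.

From HB Require Import structures.
From mathcomp Require Import all_boot all_order all_algebra.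
From mathcomp Require Import complex.
From mathcomp Require Import reals trigo.
From mathcomp Require Import zify ring lra.
Import Order.TTheory GRing.Theory Num.Theory.
Set Implicit Arguments. Unset Strict Implicit. Unset Printing Implicit Defensive.
Local Open Scope ring_scope.

(* At a multiple root z of phi_alpha the combination z phi'(z) - qd phi(z) is
   z^s (z^q - beta)^(d-1) (s (z^q - beta) + qd beta), whence
   s z^q = (s - qd) beta is real.  So q arg(z) is a multiple of pi, i.e.
   arg(z) = 2 pi j / (2q); on the second arc of arg(q,s) replace j by 2q - j.
   Then p/q < j/(2q) < r/s, which is impossible: the fraction a/b with
   aq - bp = 1 and n - q < b <= n lies in F_n to the right of p/q, hence
   r/s <= a/b, and p/q < j/(2q) < a/b = p/q + 1/(bq) forces b < 2, although
   b > n - q >= s - q >= 1. *)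

Lemma unimodular_partner_exists n p q : (0 < q <= n)%N -> coprime p q ->
  exists a b, (a * q = 1 + b * p)%N /\ (b <= n < q + b)%N.
Proof.
move=> /andP[q_gt0 qn] cpq.
have [u u_lt_q] := Bezoutl p q_gt0; rewrite gcdnC (eqP cpq).
set b := (u + (n - u) %/ q * q)%N => q_dvd.
have /divnK ab : (q %| 1 + b * p)%N.
  by rewrite /b mulnDl addnA dvdn_addl // mulnAC dvdn_mull.
exists ((1 + b * p) %/ q)%N, b; split => //.
have := divn_eq (n - u) q; have := ltn_pmod (n - u) q_gt0; rewrite /b; lia.
Qed.

Lemma coprime_unimodular a b p q : (a * q = 1 + b * p)%N -> coprime a b.
Proof.
move=> abpq; rewrite /coprime -dvdn1.
have : (gcdn a b %| a * q)%N by rewrite dvdn_mulr // dvdn_gcdl.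
by rewrite abpq dvdn_addl // dvdn_mulr // dvdn_gcdr.
Qed.

Lemma Farey_pair_right_le_unimodular n p q r s a b : Farey_pair n p q r s ->
  (a * q = 1 + b * p)%N -> (1 < b <= n)%N -> (r * b <= a * s)%N.
Proof.
move=> [/and3P[pq _ _] [_ [_ no_between]]] abpq /andP[b_gt1 bn].
rewrite leqNgt; apply/negP => asrb.
apply: (no_between a b); last by split; lia.
by rewrite /in_Farey bn (coprime_unimodular abpq) andbT; nia.
Qed.

Lemma Farey_pair_no_half_denominator n p q r s x : Farey_pair n p q r s -> (q < s)%N ->
  (p * (2 * q) < x * q)%N -> (x * s < r * (2 * q))%N -> False.
Proof.
move=> Fpqrs qs px xr; have := Fpqrs => [[/and3P[pq qn cpq] [/and3P[rs sn _] _]]].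
have q_pos_le : (0 < q <= n)%N by apply/andP; split; lia.
have [a [b [abpq /andP[bn nb]]]] := unimodular_partner_exists q_pos_le cpq.
have rbas : (r * b <= a * s)%N.
  by apply: Farey_pair_right_le_unimodular Fpqrs abpq _; apply/andP; split; lia.
have two_p_lt_x : (2 * p < x)%N by rewrite -(ltn_pmul2r (_ : 0 < q)%N) //; lia.
have xbs : (x * b * s < 2 * a * q * s)%N.
  have : (x * s * b < r * (2 * q) * b)%N by rewrite ltn_pmul2r //; lia.
  have : (r * b * (2 * q) <= a * s * (2 * q))%N by rewrite leq_pmul2r //; lia.
  lia.
have xa : (x * b < 2 * a * q)%N by move: xbs; rewrite ltn_pmul2r //; lia.
nia.
Qed.

Lemma sqr_dvdp_root_deriv (F : fieldType) (P : {poly F}) (z : F) :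
  ('X - z%:P) ^+ 2 %| P -> P.[z] = 0 /\ P^`().[z] = 0.
Proof.
case/dvdpP => Q ->; rewrite derivM deriv_exp derivXsubC.
by rewrite !hornerE subrr /=; split; ring.
Qed.

Section PhiPolynomial.
Variables (F : fieldType) (c k : F) (q s d : nat).

Let phi : {poly F} := 'X^s * ('X^q - c%:P) ^+ d - k *: 'X^(q * d).

Lemma phi_double_rootE z : (0 < q)%N -> (0 < s)%N -> (0 < d)%N -> k != 0 -> z != 0 ->
  phi.[z] = 0 -> phi^`().[z] = 0 -> s%:R * z ^+ q = (s%:R - (q * d)%:R) * c.
Proof.
move=> q_gt0 s_gt0 d_gt0 k0 z0; rewrite /phi.
rewrite !(derivB, derivM, derivZ, derivXn, deriv_exp, derivC) !(hornerE, hornerMn) subr0.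
have zpred m : (0 < m)%N -> z ^+ m = z * z ^+ m.-1 by move=> m_gt0; rewrite -exprS prednK.
have Wpred : (z ^+ q - c) ^+ d = (z ^+ q - c) * (z ^+ q - c) ^+ d.-1.
  by rewrite -exprS prednK.
move=> P0 P'0.
have euler : z ^+ s * (z ^+ q - c) ^+ d.-1 * (s%:R * (z ^+ q - c) + (q * d)%:R * c) = 0.
  transitivity (z * 0 - (q * d)%:R * 0); last by rewrite !mulr0 subrr.
  (* z phi'(z) - qd phi(z): the terms in k cancel *)
  rewrite -{1}P'0 -P0.
  rewrite Wpred (zpred s) // (zpred (q * d)) ?muln_gt0 ?q_gt0 // (zpred q) // natrM.
  ring.
have W0 : z ^+ q - c != 0.
  apply/eqP => W0; move/eqP: P0; rewrite W0 expr0n (gtn_eqF d_gt0) mulr0 sub0r oppr_eq0.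
  by rewrite mulf_eq0 expf_eq0 (negbTE k0) (negbTE z0) andbF.
move/eqP: euler; rewrite !mulf_eq0 !expf_eq0 (negbTE z0) (negbTE W0) !andbF /=.
rewrite addr_eq0 => /eqP sW.
by rewrite mulrBl -sW; ring.
Qed.
End PhiPolynomial.

Lemma de_moivre (R : realType) (a : R) n :
  Complex (cos a) (sin a) ^+ n = Complex (cos (n%:R * a)) (sin (n%:R * a)) :> R[i].
Proof.
elim: n => [|n IH]; first by rewrite expr0 mul0r cos0 sin0.
rewrite exprS IH -[n.+1]addn1 natrD mulrDl mul1r cosD sinD.
by congr Complex; ring.
Qed.

Lemma is_arg_sin_eq0 (R : realType) (z : R[i]) th n : is_arg z th ->
  complex.Im (z ^+ n) = 0 -> sin (n%:R * th) = 0.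
Proof.
move=> [z0 [_ zE]]; rewrite zE normc_def exprMn -rmorphXn de_moivre /= mul0r addr0.
move/eqP; rewrite mulf_eq0 expf_eq0 => /orP[/andP[_ /eqP rho0]|/eqP //].
by move: z0; rewrite zE normc_def rho0 mul0r eqxx.
Qed.

Lemma sin_eq0_ge0 (R : realType) (y : R) : 0 <= y -> sin y = 0 -> exists j : nat, y = j%:R * pi.
Proof.
move=> y_ge0 sy0.
have pi_gt0 := @pi_gt0 R.
have /andP[jy yj] := truncn_itv (divr_ge0 y_ge0 (ltW pi_gt0)).
exists (Num.truncn (y / pi)).
set j := Num.truncn _ in jy yj *; set t := y - j%:R * pi.
have t_ge0 : 0 <= t by rewrite subr_ge0 -ler_pdivlMr.
have t_ltpi : t < pi.
  by move: yj; rewrite ltr_pdivrMr // -natr1 mulrDl mul1r /t; lra.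
have st0 : sin t = 0.
  have := alternatingn (@sinDpi R) j t.
  rewrite /t mulr_natl subrK sy0 => /esym/eqP.
  by rewrite mulf_eq0 signr_eq0 => /eqP.
suff : t = 0 by move/eqP; rewrite subr_eq0 => /eqP.
apply/eqP; rewrite eq_le t_ge0 andbT leNgt; apply/negP => t_gt0.
by have := sin_gt0_pi (introT andP (conj t_gt0 t_ltpi)); rewrite st0 ltxx.
Qed.

Lemma ltr_2pi_frac (R : realType) (a b c d : nat) : (0 < b)%N -> (0 < d)%N ->
  (2 * pi * a%:R / b%:R < 2 * pi * c%:R / d%:R :> R) = (a * d < c * b)%N.
Proof.
move=> b_gt0 d_gt0.
have b0 : b%:R != 0 :> R by rewrite pnatr_eq0 -lt0n.
have d0 : d%:R != 0 :> R by rewrite pnatr_eq0 -lt0n.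
set k : R := 2 * pi / (b * d)%:R.
have k_gt0 : 0 < k by rewrite divr_gt0 ?mulr_gt0 ?pi_gt0 // ltr0n muln_gt0 b_gt0.
have -> : 2 * pi * a%:R / b%:R = k * (a * d)%:R by rewrite /k !natrM; field; rewrite b0 d0.
have -> : 2 * pi * c%:R / d%:R = k * (c * b)%:R by rewrite /k !natrM; field; rewrite b0 d0.
by rewrite ltr_pM2l // ltr_nat.
Qed.

Lemma ltn_frac_complement (a b c d : nat) : (a <= b)%N -> (c <= d)%N ->
  (a * d < c * b)%N = ((d - c) * b < (b - a) * d)%N.
Proof. move=> ab cd; rewrite !mulnBl; nia. Qed.

Lemma in_arg_qs_half_denominator (R : realType) p q r s j : (p < q)%N -> (r < s)%N ->
  in_arg_qs p q r s (2 * pi * j%:R / (2 * q)%:R : R) ->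
  exists x, (p * (2 * q) < x * q)%N /\ (x * s < r * (2 * q))%N.
Proof.
move=> pq rs; have q_gt0 : (0 < q)%N by apply: leq_ltn_trans pq.
have s_gt0 : (0 < s)%N by apply: leq_ltn_trans rs.
have q2_gt0 : (0 < 2 * q)%N by rewrite muln_gt0.
case=> /andP[]; rewrite !ltr_2pi_frac //; first by exists j.
move=> lo hi; exists (2 * q - j)%N.
have j_le : (j <= 2 * q)%N.
  have := leq_trans hi (leq_mul (leq_subr p q) (leqnn (2 * q))).
  by rewrite (mulnC q) ltn_pmul2r // => /ltnW.
rewrite ltn_frac_complement ?leq_subr // (subKn (ltnW rs)) in lo.
by rewrite ltn_frac_complement ?leq_subr // (subKn (ltnW pq)) in hi.
Qed.

Lemma phi_num_double_root_Im_expr_eq0 (R : realType) (alpha : R) q s d (z : R[i]) :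
  (0 < q)%N -> (0 < s)%N -> (0 < d)%N -> 0 < alpha -> z != 0 ->
  ('X - z%:P) ^+ 2 %| phi_num alpha q s d -> complex.Im (z ^+ q) = 0.
Proof.
move=> q_gt0 s_gt0 d_gt0 alpha_gt0 z0 /sqr_dvdp_root_deriv[P0 P'0].
have k0 : real_complex R (alpha ^+ d) != 0.
  by rewrite (inj_eq (@complexI R)) expf_neq0 // gt_eqF.
have := phi_double_rootE q_gt0 s_gt0 d_gt0 k0 z0 P0 P'0.
have -> : (s%:R - (q * d)%:R) * real_complex R (1 - alpha) =
          real_complex R ((s%:R - (q * d)%:R) * (1 - alpha)).
  by rewrite [RHS]rmorphM; congr (_ * _); rewrite raddfB /= !rmorph_nat.
rewrite mulr_natl => /(congr1 (@complex.Im R)).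
by rewrite raddfMn /= => /eqP; rewrite mulrn_eq0 eqn0Ngt s_gt0 => /eqP.
Qed.

Theorem theorem4p2 (R : realType) (n p q r s : nat) (alpha : R) :
  Farey_pair n p q r s -> (q < s)%N -> 0 < alpha < 1 ->
  ~ (exists z : R[i],
       Khat n p q r s z /\ multiple_root_at (phi_num alpha q s (n %/ q)) z).
Proof.
move=> Fpair qs /andP[alpha_gt0 _] [z [[_ [th [th_arg th_in]]] [z0 sqr_dvd]]].
have [/and3P[pq qn _] [/and3P[rs _ _] _]] := Fpair.
have q_gt0 : (0 < q)%N by apply: leq_ltn_trans pq.
have s_gt0 : (0 < s)%N by apply: leq_ltn_trans rs.
have d_gt0 : (0 < n %/ q)%N by rewrite divn_gt0.
have Im0 := phi_num_double_root_Im_expr_eq0 q_gt0 s_gt0 d_gt0 alpha_gt0 z0 sqr_dvd.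
have th_ge0 : 0 <= th by case: th_arg => _ [/andP[]].
have [j qth] := sin_eq0_ge0 (mulr_ge0 (ler0n _ q) th_ge0) (is_arg_sin_eq0 th_arg Im0).
have thE : th = 2 * pi * j%:R / (2 * q)%:R.
  have q0 : q%:R != 0 :> R by rewrite pnatr_eq0 -lt0n.
  by apply: (mulfI q0); rewrite qth natrM; field.
rewrite thE in th_in.
have [x [px xr]] := in_arg_qs_half_denominator pq rs th_in.
exact: Farey_pair_no_half_denominator Fpair qs px xr.
Qed.
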